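(* Let $G$ be a finite group, and let $a_1,a_2,a_3,a_4$ be independent uniformly random elements of $G$. Then \[ Pr(a_1a_2a_3a_4=a_2a_4a_1a_3)=Pr^4(G)\quad\text{and}\quad Pr(a_1a_2a_3a_4=a_3a_1a_4a_2)=Pr^4(G), \] where $Pr^4(G)$ is the probability that $a_1a_2a_3a_4=a_4a_3a_2a_1$. *)

From mathcomp Require Import all_boot all_algebra all_fingroup.
Set Implicit Arguments. Unset Strict Implicit. Unset Printing Implicit Defensive.
Import GRing.Theory.
Local Open Scope group_scope.

Definition prob4 (gT : finGroupType) (G : {group gT})
  (P : gT -> gT -> gT -> gT -> bool) : rat :=
  ((#|[set t : gT * gT * gT * gT |
        [&& t.1.1.1 \in G, t.1.1.2 \in G, t.1.2 \in G, t.2 \in G &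
            P t.1.1.1 t.1.1.2 t.1.2 t.2]]|)%:R / (#|G| ^ 4)%:R)%R.

Definition Pr4 (gT : finGroupType) (G : {group gT}) : rat :=
  prob4 G (fun a1 a2 a3 a4 => a1 * a2 * a3 * a4 == a4 * a3 * a2 * a1).

From mathcomp Require Import all_boot all_algebra all_fingroup.
Local Open Scope group_scope.

(* Each word equation is turned into the reversal equation
   [b1 b2 b3 b4 = b4 b3 b2 b1] by a change of variables that is a bijection
   of G^4 and merely conjugates both sides of the equation by fixed elements:
   [a1 a2 a3 a4 = a2 a4 a1 a3] via [(a1, a2, a3, a4) = (b2 b1, b2, b3, b4 b3)],
   and [a1 a2 a3 a4 = a3 a1 a4 a2] via
   [(a1, a2, a3, a4) = (b4^-1 b1, b2, b3 b2 b4, b4^-1)]. *)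

Section ChangeOfVariables.

Variables (gT : finGroupType) (G : {group gT}).

Definition in_G4 (t : gT * gT * gT * gT) : bool :=
  [&& t.1.1.1 \in G, t.1.1.2 \in G, t.1.2 \in G & t.2 \in G].

Lemma prob4_bij (P Q : gT -> gT -> gT -> gT -> bool)
    (f g : gT * gT * gT * gT -> gT * gT * gT * gT) :
    cancel f g ->
    {in in_G4, forall t, in_G4 (f t)} -> {in in_G4, forall t, in_G4 (g t)} ->
    {in in_G4, forall t, P (f t).1.1.1 (f t).1.1.2 (f t).1.2 (f t).2 =
                         Q t.1.1.1 t.1.1.2 t.1.2 t.2} ->
  prob4 G P = prob4 G Q.
Proof.
move=> fK fG4 gG4 fPQ; rewrite /prob4; congr (_%:R / _)%R.
rewrite -(card_preimset _ (can_inj fK)); apply: eq_card => t.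
have in_G4E u b : [&& u.1.1.1 \in G, u.1.1.2 \in G, u.1.2 \in G, u.2 \in G & b]
                  = in_G4 u && b by rewrite /in_G4 !andbA.
rewrite !inE !in_G4E.
have [tG4 | tG4] := boolP (in_G4 t); first by rewrite fG4 // fPQ.
by rewrite andFb; apply: contraNF tG4 => /andP[/gG4]; rewrite fK.
Qed.

End ChangeOfVariables.

Lemma eq_mulg2 {gT : finGroupType} (x y u v : gT) :
  (x * u * y == x * v * y) = (u == v).
Proof. by rewrite (inj_eq (mulIg y)) (inj_eq (mulgI x)). Qed.

Lemma prob4_2413 (gT : finGroupType) (G : {group gT}) :
  prob4 G (fun a1 a2 a3 a4 => a1 * a2 * a3 * a4 == a2 * a4 * a1 * a3) = Pr4 G.
Proof.
apply: (@prob4_bij _ _ _ _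
  (fun '(b1, b2, b3, b4) => (b2 * b1, b2, b3, b4 * b3))
  (fun '(a1, a2, a3, a4) => (a2^-1 * a1, a2, a3, a4 * a3^-1))).
- by case=> [[[b1 b2] b3] b4]; rewrite mulKg mulgK.
- by case=> [[[b1 b2] b3] b4] /and4P[? ? ? ?]; apply/and4P; rewrite !groupM.
- by case=> [[[a1 a2] a3] a4] /and4P[? ? ? ?]; apply/and4P; rewrite !(groupM, groupV).
case=> [[[b1 b2] b3] b4] _ /=.
by rewrite -[RHS](eq_mulg2 b2 b3) !mulgA.
Qed.

Lemma prob4_3142 (gT : finGroupType) (G : {group gT}) :
  prob4 G (fun a1 a2 a3 a4 => a1 * a2 * a3 * a4 == a3 * a1 * a4 * a2) = Pr4 G.
Proof.
apply: (@prob4_bij _ _ _ _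
  (fun '(b1, b2, b3, b4) => (b4^-1 * b1, b2, b3 * b2 * b4, b4^-1))
  (fun '(a1, a2, a3, a4) => (a4^-1 * a1, a2, a3 * a4 * a2^-1, a4^-1))).
- by case=> [[[b1 b2] b3] b4]; rewrite !invgK mulKVg !mulgK.
- by case=> [[[b1 b2] b3] b4] /and4P[? ? ? ?]; apply/and4P; rewrite !(groupM, groupV).
- by case=> [[[a1 a2] a3] a4] /and4P[? ? ? ?]; apply/and4P; rewrite !(groupM, groupV).
case=> [[[b1 b2] b3] b4] _ /=.
by rewrite -[RHS](eq_mulg2 b4^-1 (b4^-1 * b2)) !mulgA !mulgK mulVg mul1g.
Qed.

Theorem mainTheorem9 (gT : finGroupType) (G : {group gT}) :
  prob4 G (fun a1 a2 a3 a4 => a1 * a2 * a3 * a4 == a2 * a4 * a1 * a3) = Pr4 G /\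
  prob4 G (fun a1 a2 a3 a4 => a1 * a2 * a3 * a4 == a3 * a1 * a4 * a2) = Pr4 G.
Proof. by split; [exact: prob4_2413 | exact: prob4_3142]. Qed.
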